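(* Consider any instance $\mathcal{I}$ of the online volunteer notification problem whose inter-activity time distribution has minimum discrete hazard rate $q$. Then the scaled-down notification (SDN) policy is $\frac{1}{2-q}\left(1-\frac{1}{e}\right)$-competitive, i.e., $\mathbf{POL}_{\mathcal{I}}\ge\frac{1}{2-q}\left(1-\frac1e\right)\mathbf{LP}_{\mathcal{I}}$ for every such instance, where $\mathbf{POL}_{\mathcal{I}}$ is the SDN policy's expected number of completed tasks.
   Context: Online volunteer notification problem. An instance $\mathcal{I}$ consists of volunteers $[V]$, task types $[S]$, horizon $T$, arrival probabilities $\lambda_{s,t}\ge0$ with $\sum_{s=1}^S\lambda_{s,t}\le1$, match probabilities $p_{v,s}\in[0,1]$, and a probability mass function $g$ on the positive integers with CDF $G(\tau)=\sum_{i\le\tau}g(i)$, $G(0)=0$. In each period $t$ at most one task arrives, of type $s$ with probability $\lambda_{s,t}$, independently across periods. All volunteers start active. Upon an arrival the platform immediately and irrevocably notifies a subset of volunteers; each notified active volunteer $v$ responds positively independently with probability $p_{v,s}$, and the task is completed iff at least one does. A volunteer who is active and notified at time $t$ becomes inactive (regardless of response) and becomes active again at time $t+Z$, $Z\sim g$ independent; inactive volunteers ignore notifications and are unaffected by them. The platform knows $\lambda,p,g$ but not states. MDHR: $q=\min_{\tau\in\mathbb{N}}\frac{g(\tau)}{1-G(\tau-1)}$ (with $\frac00:=1$). $\mathcal{P}$: set of $\mathbf{x}\in\mathbb{R}^{V\times S\times T}$ with $0\le x_{v,s,t}\le1$ and $\sum_{\tau=1}^t\sum_{s}\lambda_{s,\tau}x_{v,s,\tau}(1-G(t-\tau))\le1$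 for all $v,t$. $\mathbf{LP}_{\mathcal{I}}=\max_{\mathbf{x}\in\mathcal{P}}\sum_{t,s}\lambda_{s,t}\min\{\sum_v x_{v,s,t}p_{v,s},1\}$. A policy is $c$-competitive if $\mathbf{POL}_{\mathcal{I}}\ge c\,\mathbf{LP}_{\mathcal{I}}$ for all instances. Ex ante solution: $f(\mathbf{x})=\sum_{t,s}\lambda_{s,t}\big(1-\prod_{v}(1-x_{v,s,t}p_{v,s})\big)$; $\mathbf{x}^*_{LP}$ an optimal solution of $\mathbf{LP}_{\mathcal{I}}$; $\mathbf{x}^*_{AA}$ the output of: $\mathbf{x}^0=\mathbf{0}$, for $i=1..m$ (some $m\in\mathbb{N}$) $\mathbf{y}^i\in\arg\max_{\mathbf{x}\in\mathcal{P}}\langle\mathbf{x},\nabla f(\mathbf{x}^{i-1})\rangle$, $\mathbf{x}^i=\mathbf{x}^{i-1}+\mathbf{y}^i/m$, output $\mathbf{x}^m$; $\mathbf{x}^*_{SQ}$ built for $v=1,\dots,V$ in order, $(x^{SQ}_{v,s,t})_{s,t}$ optimal for $\max\sum_{t,s}\lambda_{s,t}\prod_{u<v}(1-p_{u,s}x^{SQ}_{u,s,t})p_{v,s}x_{v,s,t}$ s.t. $0\le x_{v,s,t}\le1$, $\sum_{\tau\le t}\sum_s\lambda_{s,\tau}x_{v,s,\tau}(1-G(t-\tau))\le1$ for all $t$; $\mathbf{x}^*\in\arg\max_{\mathbf{x}\in\{\mathbf{x}^*_{LP},\mathbf{x}^*_{AA},\mathbf{x}^*_{SQ}\}}f(\mathbf{x})$.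 SDN policy: set $\beta_{v,1}=1$ and $\beta_{v,t}=1-\sum_{t'=1}^{t-1}\sum_{s=1}^S\lambda_{s,t'}\frac{x^*_{v,s,t'}}{2-q}(1-G(t-t'))$ for $t\ge2$; when a task of type $s$ arrives at time $t$, notify each volunteer $v$ independently with probability $\frac{x^*_{v,s,t}}{(2-q)\beta_{v,t}}$. *)

From HB Require Import structures.
From mathcomp Require Import all_boot all_order all_algebra.
From mathcomp Require Import all_classical all_reals all_analysis.
Set Implicit Arguments. Unset Strict Implicit. Unset Printing Implicit Defensive.
Import Order.TTheory GRing.Theory Num.Theory.
Local Open Scope ring_scope.
Local Open Scope classical_set_scope.

Section VNP.
Variables (R : realType) (V S T : nat).
(* arrival probabilities lam s t, match probabilities p v s, pmf g on positive
   integers (g 0 is never used). Times are naturals 1..T. *)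
Variables (lam : 'I_S -> nat -> R) (p : 'I_V -> 'I_S -> R) (g : nat -> R).

(* vectors x_{v,s,t}; only entries with 1 <= t <= T are meaningful *)
Definition vec := 'I_V -> 'I_S -> nat -> R.

Definition Gcdf (tau : nat) : R := \sum_(1 <= i < tau.+1) g i.

(* discrete hazard rate g(tau)/(1-G(tau-1)) with 0/0 := 1 *)
Definition hazard (tau : nat) : R :=
  if 1 - Gcdf tau.-1 == 0 then 1 else g tau / (1 - Gcdf tau.-1).

Definition mdhr : R := inf [set hazard tau | tau in [set tau : nat | (0 < tau)%N]].

Definition feas1 (z : 'I_S -> nat -> R) : Prop :=
  (forall s t, (1 <= t <= T)%N -> 0 <= z s t <= 1) /\
  (forall t, (1 <= t <= T)%N ->
     \sum_(1 <= tau < t.+1) \sum_(s < S) lam s tau * z s tau * (1 - Gcdf (t - tau)) <= 1).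

Definition inP (x : vec) : Prop := forall v, feas1 (x v).

Definition lpobj (x : vec) : R :=
  \sum_(1 <= t < T.+1) \sum_(s < S) lam s t * Num.min (\sum_(v < V) x v s t * p v s) 1.

Definition LPval : R := sup [set lpobj x | x in [set x | inP x]].

Definition lp_optimal (x : vec) : Prop :=
  inP x /\ forall z, inP z -> lpobj z <= lpobj x.

Definition fobj (x : vec) : R :=
  \sum_(1 <= t < T.+1) \sum_(s < S) lam s t * (1 - \prod_(v < V) (1 - x v s t * p v s)).

(* gradient of f (partial derivative w.r.t. x_{v,s,t}) *)
Definition gradf (x : vec) : vec :=
  fun v s t => lam s t * p v s * \prod_(u < V | u != v) (1 - x u s t * p u s).

Definition inner (x y : vec) : R :=
  \sum_(v < V) \sum_(s < S) \sum_(1 <= t < T.+1) x v s t * y v s t.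

(* iterates x^i of the continuous-greedy procedure, given directions y^i *)
Fixpoint aa_seq (m : nat) (y : nat -> vec) (i : nat) : vec :=
  match i with
  | 0 => fun _ _ _ => 0
  | i'.+1 => fun v s t => aa_seq m y i' v s t + y i'.+1 v s t / m%:R
  end.

Definition aa_valid (m : nat) (y : nat -> vec) : Prop :=
  forall i, (1 <= i <= m)%N ->
    inP (y i) /\
    forall z, inP z -> inner z (gradf (aa_seq m y i.-1)) <= inner (y i) (gradf (aa_seq m y i.-1)).

Definition aa_output (m : nat) (y : nat -> vec) : vec := aa_seq m y m.

Definition sq_obj (xSQ : vec) (v : 'I_V) (z : 'I_S -> nat -> R) : R :=
  \sum_(1 <= t < T.+1) \sum_(s < S)
     lam s t * (\prod_(u < V | (u < v)%N) (1 - p u s * xSQ u s t)) * p v s * z s t.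

Definition sq_valid (xSQ : vec) : Prop :=
  forall v, feas1 (xSQ v) /\ forall z, feas1 z -> sq_obj xSQ v z <= sq_obj xSQ v (xSQ v).

Definition beta (q : R) (x : vec) (v : 'I_V) (t : nat) : R :=
  1 - \sum_(1 <= t' < t) \sum_(s < S) lam s t' * (x v s t' / (2 - q)) * (1 - Gcdf (t - t')).

Definition sdn_prob (q : R) (x : vec) : vec :=
  fun v s t => x v s t / ((2 - q) * beta q x v t).

(* Per-volunteer outcome in a period: None = not notified (or inactive);
   Some (r, k) = notified while active, responded iff r, and inter-activity
   time Z = k+1 truncated at T+1 (Z >= T+1 means never active again within the
   horizon, probability 1 - G(T)). *)
Definition outcome := option (bool * 'I_T.+1).

Definition zw (k : 'I_T.+1) : R := if (k < T)%N then g k.+1 else 1 - Gcdf T.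

(* st v = time at which v becomes active again; v active at t iff st v <= t *)
Definition ow (pi : vec) (s : 'I_S) (t : nat) (st : 'I_V -> nat) (v : 'I_V)
  (o : outcome) : R :=
  if (st v <= t)%N then
    match o with
    | None => 1 - pi v s t
    | Some (r, k) => pi v s t * (if r then p v s else 1 - p v s) * zw k
    end
  else (if o is None then 1 else 0).

Definition upd (t : nat) (st : 'I_V -> nat) (o : {ffun 'I_V -> outcome}) : 'I_V -> nat :=
  fun v => if (st v <= t)%N then
             (match o v with None => st v | Some (_, k) => (t + k.+1)%N end)
           else st v.

Definition completed (t : nat) (st : 'I_V -> nat) (o : {ffun 'I_V -> outcome}) : R :=
  if [exists v, (st v <= t)%N && (if o v is Some (true, _) then true else false)]
  then 1 else 0.

Fixpoint polv (pi : vec) (n t : nat) (st : 'I_V -> nat) : R :=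
  match n with
  | 0 => 0
  | n'.+1 =>
      \sum_(s < S) lam s t *
        \sum_(o : {ffun 'I_V -> outcome})
           (\prod_(v < V) ow pi s t st v (o v)) *
           (completed t st o + polv pi n' t.+1 (upd t st o))
      + (1 - \sum_(s < S) lam s t) * polv pi n' t.+1 st
  end.

Definition POL (pi : vec) : R := polv pi T 1 (fun _ => 0%N).

End VNP.

(* Under SDN, volunteer v is active at time t with probability exactly
   beta_{v,t}: while active it is notified at rate x_{v,s,t} / (2 - q), and a
   notification at t' keeps it inactive at t with probability 1 - G(t - t').
   Since a minimum hazard rate q makes 1 - G shrink by a factor 1 - q per
   period, the constraints of P give beta_{v,t} >= 1 / (2 - q), so SDN only
   uses notification probabilities in [0, xstar].
   The completion indicator 1 - prod_v (1 - a_v c_v) of a type-s task is at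
   least sum_v a_v c_v prod_{u<v} (1 - c_u), which is linear in the activity
   indicators a_v; taking expectations replaces a_v by beta_{v,t}, and
   telescoping gives POL >= f(xstar) / (2 - q).  Finally
   f(xstar) >= f(x_LP) >= (1 - 1/e) LP because
   1 - prod (1 - z_v) >= (1 - 1/e) min (sum z_v, 1) on [0,1]^V. *)

From HB Require Import structures.
From mathcomp Require Import all_boot all_order all_algebra.
From mathcomp Require Import all_classical all_reals all_analysis.
From mathcomp Require Import lra ring zify.
Set Implicit Arguments. Unset Strict Implicit. Unset Printing Implicit Defensive.
Import Order.TTheory GRing.Theory Num.Theory.
Import numFieldNormedType.Exports.
Local Open Scope classical_set_scope.
Local Open Scope ring_scope.

Section PrefixProducts.
Variables (R : comRingType) (n : nat).

Lemma prod_prefixS (z : 'I_n -> R) (v : 'I_n) :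
  \prod_(u < n | (u < v.+1)%N) (1 - z u) =
  (1 - z v) * \prod_(u < n | (u < v)%N) (1 - z u).
Proof.
rewrite (bigD1 v) ?ltnSn //=; congr (_ * _); apply: eq_bigl => u.
by rewrite ltnS ltn_neqAle -val_eqE andbC.
Qed.

Lemma one_sub_prod_telescope (z : 'I_n -> R) :
  1 - \prod_(v < n) (1 - z v) =
  \sum_(v < n) z v * \prod_(u < n | (u < v)%N) (1 - z u).
Proof.
pose P k := \prod_(u < n | (u < k)%N) (1 - z u).
have P0 : P 0%N = 1 by rewrite /P big_pred0.
have Pn : P n = \prod_(v < n) (1 - z v) by apply: eq_bigl => u; rewrite ltn_ord.
transitivity (\sum_(0 <= k < n) (P k - P k.+1)).
  rewrite -[LHS]opprB -Pn -P0 -telescope_sumr // -sumrN.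
  by apply: eq_bigr => k _; rewrite opprB.
rewrite big_mkord; apply: eq_bigr => v _.
by rewrite /P prod_prefixS mulrBl mul1r opprB addrC subrK.
Qed.

End PrefixProducts.

Lemma sum_prefix_le_one_sub_prod (R : realFieldType) n (a c : 'I_n -> R) :
  (forall v, 0 <= a v <= 1) -> (forall v, 0 <= c v <= 1) ->
  \sum_v a v * c v * \prod_(u < n | (u < v)%N) (1 - c u) <=
  1 - \prod_v (1 - a v * c v).
Proof.
move=> ha hc; rewrite one_sub_prod_telescope; apply: ler_sum => v _.
have [a0 a1] := andP (ha v); have [c0 c1] := andP (hc v).
apply: ler_wpM2l; first exact: mulr_ge0.
apply: ler_prod => u _; have [au0 au1] := andP (ha u); have [cu0 cu1] := andP (hc u).
have acu : a u * c u <= c u by rewrite ler_piMl.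
apply/andP; split; lra.
Qed.

Lemma one_sub_expN1_min_le (R : realType) n (z : 'I_n -> R) :
  (forall v, 0 <= z v <= 1) ->
  (1 - (expR 1)^-1) * Num.min (\sum_v z v) 1 <= 1 - \prod_v (1 - z v).
Proof.
move=> hz.
have prod_le : \prod_v (1 - z v) <= expR (- \sum_v z v).
  rewrite -sumrN expR_sum; apply: ler_prod => v _.
  have [z0 z1] := andP (hz v); have := expR_ge1Dx (- z v) => ez.
  by apply/andP; split; lra.
have : 0 <= \sum_v z v by apply: sumr_ge0 => v _; have /andP[] := hz v.
move: prod_le; set y := \sum_v z v => prod_le y0.
rewrite -expRN.
suff : (1 - expR (-1)) * Num.min y 1 <= 1 - expR (- y) by lra.
have [y1|/ltW y1] := leP y 1.
  have := convex_expR (Itv01 y0 y1) (-1) 0.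
  rewrite !convRE /= /unstable.onem expR0 mulr0 addr0 mulrN1 => h.
  nra.
have : expR (- y) <= expR (-1) by rewrite ler_expR lerN2.
lra.
Qed.

Lemma sum_ffun_prod_sum (R : comRingType) (I A : finType) (F h : I -> A -> R) :
  (forall i, \sum_a F i a = 1) ->
  \sum_(o : {ffun I -> A}) (\prod_i F i (o i)) * \sum_i h i (o i) =
  \sum_i \sum_a F i a * h i a.
Proof.
move=> F1; under eq_bigr do rewrite mulr_sumr.
rewrite exchange_big /=; apply: eq_bigr => i _.
pose Fi j a := if j == i then F j a * h j a else F j a.
have E (o : {ffun I -> A}) : \prod_j F j (o j) * h i (o i) = \prod_j Fi j (o j).
  rewrite (bigD1 i) //= [RHS](bigD1 i) //= /Fi eqxx mulrAC; congr (_ * _).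
  by apply: eq_bigr => j /negbTE ->.
under eq_bigr do rewrite E.
rewrite -bigA_distr_bigA (bigD1 i) //= [X in _ * X]big1 ?mulr1.
  by apply: eq_bigr => a _; rewrite /Fi eqxx.
by move=> j /negbTE ji; under eq_bigr do rewrite /Fi ji; exact: F1.
Qed.

Section InterActivityTime.
Variables (R : realType) (g : nat -> R).
Hypothesis g_ge0 : forall i, (0 < i)%N -> 0 <= g i.
Hypothesis Gcdf_cvg1 : Gcdf g n @[n --> \oo] --> (1 : R).

Lemma GcdfS n : Gcdf g n.+1 = Gcdf g n + g n.+1.
Proof. by rewrite /Gcdf big_nat_recr. Qed.

Lemma Gcdf0 : Gcdf g 0 = 0.
Proof. by rewrite /Gcdf big_geq. Qed.

Lemma nondecreasing_Gcdf : {homo Gcdf g : n m / (n <= m)%N >-> n <= m}.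
Proof. by apply/nondecreasing_seqP => n; rewrite GcdfS lerDl g_ge0. Qed.

Lemma Gcdf_le1 n : Gcdf g n <= 1.
Proof.
rewrite -(cvg_lim _ Gcdf_cvg1) //.
exact: nondecreasing_cvgn_le nondecreasing_Gcdf (cvgP _ Gcdf_cvg1) n.
Qed.

Lemma hazard_ge0 k : (0 < k)%N -> 0 <= hazard g k.
Proof.
move=> k0; rewrite /hazard; case: eqP => // _.
by rewrite divr_ge0 ?g_ge0 // subr_ge0 Gcdf_le1.
Qed.

Lemma mdhr_le_hazard k : (0 < k)%N -> mdhr g <= hazard g k.
Proof.
move=> k0; apply: ge_inf; last by exists k.
by exists 0 => _ [j j0 <-]; exact: hazard_ge0.
Qed.

Lemma mdhr_le1 : mdhr g <= 1.
Proof.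
apply: (le_trans (mdhr_le_hazard (ltn0Sn 0))).
rewrite /hazard /= Gcdf0 subr0 oner_eq0 divr1.
by have := Gcdf_le1 1; rewrite GcdfS Gcdf0 add0r.
Qed.

Lemma survivalS_le k : 1 - Gcdf g k.+1 <= (1 - mdhr g) * (1 - Gcdf g k).
Proof.
have := mdhr_le_hazard (ltn0Sn k); rewrite /hazard /= GcdfS.
have gk := g_ge0 (ltn0Sn k).
case: eqP => [surv0 _|/eqP surv_neq0 hq]; first by rewrite surv0 mulr0; lra.
have surv_gt0 : 0 < 1 - Gcdf g k by rewrite lt_def surv_neq0 subr_ge0 Gcdf_le1.
rewrite ler_pdivlMr // in hq.
rewrite mulrBl mul1r; lra.
Qed.

Lemma sum_zw T : \sum_(k : 'I_T.+1) zw g k = 1.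
Proof.
rewrite big_ord_recr /= /zw /= ltnn.
under eq_bigr => i _ do rewrite /= ltn_ord.
by rewrite /Gcdf big_add1 /= big_mkord addrC subrK.
Qed.

Lemma zw_ge0 T (k : 'I_T.+1) : 0 <= zw g k.
Proof. by rewrite /zw; case: ifP => _; rewrite ?g_ge0 // subr_ge0 Gcdf_le1. Qed.

End InterActivityTime.

Section Feasibility.
Variables (R : realType) (V S T : nat) (lam : 'I_S -> nat -> R) (g : nat -> R).

Lemma feas1_convex (J : seq nat) (w : nat -> R) (z : nat -> 'I_S -> nat -> R) :
  (forall j, 0 <= w j) -> \sum_(j <- J) w j <= 1 ->
  (forall j, j \in J -> feas1 T lam g (z j)) ->
  feas1 T lam g (fun s t => \sum_(j <- J) w j * z j s t).
Proof.
move=> w_ge0 w_le1 z_feas.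
have le1 a : a <= \sum_(j <- J) w j -> a <= 1 := fun h => le_trans h w_le1.
split=> [s t ht|t ht].
  rewrite big_seq sumr_ge0 => [|j jJ]; last by rewrite mulr_ge0 ?(andP ((z_feas j jJ).1 s t ht)).1.
  apply: le1; rewrite !big_seq; apply: ler_sum => j jJ.
  by rewrite ler_piMr // (andP ((z_feas j jJ).1 s t ht)).2.
have -> : \sum_(1 <= tau < t.+1) \sum_(s < S)
    lam s tau * (\sum_(j <- J) w j * z j s tau) * (1 - Gcdf g (t - tau)) =
  \sum_(j <- J) w j * \sum_(1 <= tau < t.+1) \sum_(s < S)
    lam s tau * z j s tau * (1 - Gcdf g (t - tau)).
  under eq_bigr do under eq_bigr do rewrite mulr_sumr mulr_suml.
  under eq_bigr do rewrite exchange_big /=.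
  rewrite exchange_big /=; apply: eq_bigr => j _; rewrite mulr_sumr.
  apply: eq_bigr => tau _; rewrite mulr_sumr; apply: eq_bigr => s _; ring.
apply: le1; rewrite !big_seq; apply: ler_sum => j jJ.
by rewrite ler_piMr // ((z_feas j jJ).2 t ht).
Qed.

Lemma aa_seqE m (y : nat -> vec R V S) i v s t :
  aa_seq m y i v s t = \sum_(1 <= j < i.+1) m%:R^-1 * y j v s t.
Proof.
elim: i => [|i IH]; first by rewrite big_geq.
by rewrite /= IH [in RHS]big_nat_recr //= mulrC.
Qed.

Lemma aa_output_feasible m (y : nat -> vec R V S) :
  (forall j, (1 <= j <= m)%N -> inP T lam g (y j)) ->
  inP T lam g (aa_output m y).
Proof.
move=> y_feas v; rewrite /aa_output.
have -> : aa_seq m y m v = fun s t => \sum_(1 <= j < m.+1) m%:R^-1 * y j v s t.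
  by apply/funext => s; apply/funext => t; rewrite aa_seqE.
apply: feas1_convex => [j||j]; first by rewrite invr_ge0.
  rewrite sumr_const_nat subn1 /=.
  have [->|m_gt0] := posnP m; first by rewrite mulr0n ler01.
  by rewrite -[X in X <= _]mulr_natr mulVf ?pnatr_eq0 -?lt0n.
by move=> jm; apply: y_feas; move: jm; rewrite mem_index_iota.
Qed.

End Feasibility.

Lemma sum_outcomeE (R : comRingType) T (F : outcome T -> R) :
  \sum_(o : outcome T) F o =
  F None + \sum_(b : bool) \sum_(k : 'I_T.+1) F (Some (b, k)).
Proof.
rewrite (bigD1 None) //=; congr (_ + _).
rewrite (reindex_onto Some (odflt (true, ord0))) /=; last by case.
by rewrite pair_big /=; apply: eq_big => [[b k]|[b k] _] //=; rewrite eqxx.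
Qed.

Section Model.
Variables (R : realType) (V S T : nat) (lam : 'I_S -> nat -> R)
  (p : 'I_V -> 'I_S -> R) (g : nat -> R).
Hypothesis lam_ge0 : forall s t, (1 <= t <= T)%N -> 0 <= lam s t.
Hypothesis lam_sum_le1 : forall t, (1 <= t <= T)%N -> \sum_(s < S) lam s t <= 1.
Hypothesis p01 : forall v s, 0 <= p v s <= 1.
Hypothesis g_ge0 : forall i, (0 < i)%N -> 0 <= g i.
Hypothesis Gcdf_cvg1 : Gcdf g n @[n --> \oo] --> (1 : R).

Section Notification.
Variable pi : vec R V S.
Hypothesis pi01 : forall v s t, (1 <= t <= T)%N -> 0 <= pi v s t <= 1.

Definition resp_prob v s t := pi v s t * p v s.
Definition prefix_no_resp v s t := \prod_(u < V | (u < v)%N) (1 - resp_prob u s t).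
Definition credit v t := \sum_(s < S) lam s t * resp_prob v s t * prefix_no_resp v s t.

(* A single volunteer is tracked through its reactivation time [a]: it is
   active at [t] iff [a <= t]. *)
Definition next_act (t a : nat) (o : outcome T) : nat :=
  if (a <= t)%N then (if o is Some (_, k) then (t + k.+1)%N else a) else a.

Definition step_exp v t a (f : nat -> R) :=
  \sum_(s < S) lam s t *
    \sum_(o : outcome T) ow p g pi s t (fun=> a) v o * f (next_act t a o)
  + (1 - \sum_(s < S) lam s t) * f a.

Fixpoint future_credit v n t a := match n with
  | 0 => 0
  | n'.+1 => (if (a <= t)%N then credit v t else 0) +
             step_exp v t a (future_credit v n' t.+1)
  end.

Lemma resp_prob01 v s t : (1 <= t <= T)%N -> 0 <= resp_prob v s t <= 1.
Proof.
move=> ht; have [pi0 pi1] := andP (pi01 v s ht); have [p0 p1] := andP (p01 v s).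
by rewrite /resp_prob mulr_ge0 // mulr_ile1.
Qed.

Lemma sum_ow s t st v : \sum_(o : outcome T) ow p g pi s t st v o = 1.
Proof.
rewrite sum_outcomeE /ow; case: (st v <= t)%N.
  by rewrite big_bool /= -!mulr_sumr !sum_zw; ring.
by rewrite big1 ?addr0 // => b _; rewrite big1.
Qed.

Lemma ow_ge0 s t st v (o : outcome T) : (1 <= t <= T)%N -> 0 <= ow p g pi s t st v o.
Proof.
move=> ht; have [pi0 pi1] := andP (pi01 v s ht); have [p0 p1] := andP (p01 v s).
rewrite /ow; case: (st v <= t)%N; case: o => [[b k]|] //=; last by lra.
by rewrite !mulr_ge0 ?(zw_ge0 g_ge0 Gcdf_cvg1) //; case: b; lra.
Qed.

Definition responds (o : outcome T) : bool := if o is Some (true, _) then true else false.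

Lemma completedE t st (o : {ffun 'I_V -> outcome T}) :
  completed R t st o = 1 - \prod_v (1 - ((st v <= t)%N && responds (o v))%:R).
Proof.
rewrite /completed; case: existsP => [[v /andP[act resp]]|none].
  by rewrite (bigD1 v) //= act /responds resp /= subrr mul0r subr0.
rewrite big1 ?subrr // => v _.
have /negbTE -> : ~~ ((st v <= t)%N && responds (o v)) by apply/negP => h; apply: none; exists v.
by rewrite subr0.
Qed.

Lemma expected_completed s t st :
  \sum_(o : {ffun 'I_V -> outcome T}) (\prod_v ow p g pi s t st v (o v)) * completed R t st o
  = 1 - \prod_v (1 - (st v <= t)%N%:R * resp_prob v s t).
Proof.
pose w v (a : outcome T) := ow p g pi s t st v a.
pose w_fail v (a : outcome T) := w v a * (1 - ((st v <= t)%N && responds a)%:R).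
have split_completed (o : {ffun 'I_V -> outcome T}) :
    (\prod_v w v (o v)) * completed R t st o = \prod_v w v (o v) - \prod_v w_fail v (o v).
  by rewrite completedE mulrBr mulr1 big_split.
rewrite (eq_bigr _ (fun o _ => split_completed o)) sumrB.
rewrite -(bigA_distr_bigA w) -(bigA_distr_bigA w_fail) big1 => [|v _]; last exact: sum_ow.
congr (_ - _); apply: eq_bigr => v _; rewrite /w_fail /w.
rewrite sum_outcomeE /ow /responds; case: (st v <= t)%N => /=.
  rewrite big_bool /= big1 => [|k _]; last by rewrite subrr mulr0.
  under eq_bigr do rewrite subr0 mulr1.
  by rewrite -mulr_sumr sum_zw /resp_prob; ring.
by rewrite big1 => [|b _]; [ring | rewrite big1 // => k _; rewrite mul0r].
Qed.

Definition notif_rate v t := \sum_(s < S) lam s t * pi v s t.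

Lemma step_exp_active v t a f : (a <= t)%N -> step_exp v t a f =
  (1 - notif_rate v t) * f a + notif_rate v t * \sum_(k < T.+1) zw g k * f (t + k.+1)%N.
Proof.
move=> at_; rewrite /step_exp /ow /next_act at_.
under eq_bigr => s _ do rewrite sum_outcomeE big_bool /= -big_split /=.
have E s : lam s t * ((1 - pi v s t) * f a + \sum_(k < T.+1)
     (pi v s t * p v s * zw g k * f (t + k.+1)%N +
      pi v s t * (1 - p v s) * zw g k * f (t + k.+1)%N)) =
   lam s t * f a - lam s t * pi v s t * f a +
   lam s t * pi v s t * \sum_(k < T.+1) zw g k * f (t + k.+1)%N.
  rewrite mulrDr !mulr_sumr; congr (_ + _); first by ring.
  by apply: eq_bigr => k _; ring.
under eq_bigr do rewrite E.
by rewrite big_split /= sumrB -!mulr_suml /notif_rate; ring.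
Qed.

Lemma step_exp_inactive v t a f : (t < a)%N -> step_exp v t a f = f a.
Proof.
move=> ta; rewrite /step_exp /ow /next_act leqNgt ta /=.
have E s : lam s t * \sum_(o : outcome T) (if o is None then 1 else 0) * f a = lam s t * f a.
  by rewrite sum_outcomeE big_bool /= !big1 ?addr0 ?mul1r // => k _; rewrite mul0r.
under eq_bigr do rewrite E.
by rewrite -mulr_suml; ring.
Qed.

Lemma future_credit_active v n t a : (a <= t)%N ->
  future_credit v n t a = future_credit v n t t.
Proof.
elim: n t a => [//|n IH] t a at_ /=; rewrite at_ leqnn !step_exp_active ?leqnn //.
by rewrite (IH t.+1 a) ?(IH t.+1 t) // ltnW.
Qed.

Lemma future_credit_late v n t a : (t + n <= a)%N -> future_credit v n t a = 0.
Proof.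
elim: n t a => [//|n IH] t a tna /=.
have ta : (t < a)%N by lia.
by rewrite leqNgt ta step_exp_inactive // add0r IH // addSnnS.
Qed.

Lemma future_credit_inactive v n t a : (t < a)%N ->
  future_credit v n.+1 t a = future_credit v n t.+1 a.
Proof. by move=> ta /=; rewrite leqNgt ta step_exp_inactive // add0r. Qed.

Lemma sum_future_creditS n t st :
  \sum_v future_credit v n.+1 t (st v) =
  \sum_(s < S) lam s t * (\sum_v (st v <= t)%N%:R * resp_prob v s t * prefix_no_resp v s t +
     \sum_v \sum_(o : outcome T) ow p g pi s t st v o *
       future_credit v n t.+1 (next_act t (st v) o))
  + (1 - \sum_(s < S) lam s t) * \sum_v future_credit v n t.+1 (st v).
Proof.
rewrite /= big_split /= /step_exp big_split /= -mulr_sumr addrA; congr (_ + _).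
under [RHS]eq_bigr do rewrite mulrDr.
rewrite big_split /=; congr (_ + _); last first.
  by rewrite exchange_big /=; apply: eq_bigr => s _; rewrite mulr_sumr.
rewrite (eq_bigr (fun v => \sum_(s < S) lam s t * ((st v <= t)%N%:R * resp_prob v s t * prefix_no_resp v s t))).
  by rewrite exchange_big /=; apply: eq_bigr => s _; rewrite mulr_sumr.
move=> v _; case: (st v <= t)%N; rewrite /credit.
  by apply: eq_bigr => s _; rewrite mul1r mulrA.
by rewrite big1 // => s _; rewrite !mul0r mulr0.
Qed.

Lemma sum_future_credit_le_polv n t st : (1 <= t)%N -> (t + n <= T.+1)%N ->
  \sum_v future_credit v n t (st v) <= polv T lam p g pi n t st.
Proof.
elim: n t st => [|n IH] t st t1 tn; first by rewrite big1.
have htT : (1 <= t <= T)%N by lia.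
have IHt st' : \sum_v future_credit v n t.+1 (st' v) <= polv T lam p g pi n t.+1 st'.
  by apply: IH; lia.
rewrite sum_future_creditS /=; apply: lerD; last first.
  by apply: ler_wpM2l; [have := lam_sum_le1 htT; lra | exact: IHt].
apply: ler_sum => s _; apply: ler_wpM2l; first exact: lam_ge0.
under [X in _ <= X]eq_bigr do rewrite mulrDr.
rewrite big_split /=; apply: lerD.
  rewrite expected_completed; apply: sum_prefix_le_one_sub_prod => v; last exact: resp_prob01.
  by case: (st v <= t)%N; rewrite ?lexx ?ler01.
rewrite -(sum_ffun_prod_sum (F := fun v => ow p g pi s t st v)
   (fun v a => future_credit v n t.+1 (next_act t (st v) a))) => [|v]; last exact: sum_ow s t st v.
apply: ler_sum => o _; apply: ler_wpM2l; last exact: IHt.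
by apply: prodr_ge0 => v _; exact: ow_ge0.
Qed.

End Notification.

Section ScaledDownNotification.
Variable x : vec R V S.
Hypothesis x_feas : inP T lam g x.

Local Notation q := (mdhr g).
Local Notation pis := (sdn_prob lam g q x).
Local Notation bt := (beta lam g q x).

Lemma one_le_2_sub_mdhr : 1 <= 2 - q.
Proof. by have := mdhr_le1 g_ge0 Gcdf_cvg1; lra. Qed.

Lemma x01 v s t : (1 <= t <= T)%N -> 0 <= x v s t <= 1.
Proof. by move=> ht; have [/(_ s t ht)] := x_feas v. Qed.

(* Termwise, [survivalS_le] bounds this by [1 - q] times the constraint of [P]
   at [t - 1]. *)
Lemma pending_load_le v t : (t <= T.+1)%N ->
  \sum_(1 <= t' < t) \sum_(s < S) lam s t' * x v s t' * (1 - Gcdf g (t - t')) <= 1 - q.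
Proof.
have q_le1 := mdhr_le1 g_ge0 Gcdf_cvg1.
case: t => [|t] tT; first by rewrite big_geq //; lra.
have [->|t_gt0] := posnP t; first by rewrite big_geq //; lra.
apply: (@le_trans _ _ ((1 - q) * \sum_(1 <= t' < t.+1) \sum_(s < S)
   lam s t' * x v s t' * (1 - Gcdf g (t - t')))).
  rewrite mulr_sumr; apply: ler_sum_nat => t' /andP[t1 t2].
  rewrite mulr_sumr; apply: ler_sum => s _.
  have ht' : (1 <= t' <= T)%N by lia.
  rewrite mulrCA ler_wpM2l ?mulr_ge0 ?lam_ge0 ?(andP (x01 v s ht')).1 //.
  by rewrite subSn // survivalS_le.
rewrite -[X in _ <= X]mulr1 ler_wpM2l ?subr_ge0 //.
by have [_ ] := x_feas v; apply; lia.
Qed.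

Lemma beta_ge v t : (t <= T.+1)%N -> 1 <= (2 - q) * bt v t.
Proof.
move=> tT; rewrite /beta mulrBr mulr1.
have -> : (2 - q) * \sum_(1 <= t' < t) \sum_(s < S)
    lam s t' * (x v s t' / (2 - q)) * (1 - Gcdf g (t - t')) =
  \sum_(1 <= t' < t) \sum_(s < S) lam s t' * x v s t' * (1 - Gcdf g (t - t')).
  rewrite mulr_sumr; apply: eq_bigr => t' _; rewrite mulr_sumr.
  apply: eq_bigr => s _; field.
  by rewrite gt_eqF // (lt_le_trans ltr01 one_le_2_sub_mdhr).
by have := pending_load_le v tT; lra.
Qed.

Lemma beta_gt0 v t : (t <= T.+1)%N -> 0 < bt v t.
Proof.
move=> tT; have := beta_ge v tT; have := one_le_2_sub_mdhr => h1 h2.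
by rewrite -(pmulr_rgt0 _ (_ : 0 < 2 - q)); lra.
Qed.

Lemma sdn_prob_le v s t : (1 <= t <= T)%N -> 0 <= pis v s t <= x v s t.
Proof.
move=> ht; have tT : (t <= T.+1)%N by lia.
have bge := beta_ge v tT; have [x0 x1] := andP (x01 v s ht).
have b_gt0 : 0 < (2 - q) * bt v t by apply: lt_le_trans bge.
by rewrite /sdn_prob divr_ge0 ?(ltW b_gt0) //= ler_pdivrMr // ler_peMr.
Qed.

Lemma sdn_prob01 v s t : (1 <= t <= T)%N -> 0 <= pis v s t <= 1.
Proof.
move=> ht; have /andP[s0 sx] := sdn_prob_le v s ht.
by rewrite s0 (le_trans sx) // (andP (x01 v s ht)).2.
Qed.

Lemma sdn_prob_beta v s t : (t <= T.+1)%N -> pis v s t * bt v t = x v s t / (2 - q).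
Proof.
move=> tT; have := beta_gt0 v tT; have := one_le_2_sub_mdhr => h1 h2.
by rewrite /sdn_prob; field; rewrite !gt_eqF //; lra.
Qed.

Definition deact_rate v t := \sum_(s < S) lam s t * (x v s t / (2 - q)).

Lemma beta_deact_rate v t :
  bt v t = 1 - \sum_(1 <= t' < t) deact_rate v t' * (1 - Gcdf g (t - t')).
Proof.
by rewrite /beta; congr (1 - _); apply: eq_bigr => t' _; rewrite /deact_rate mulr_suml.
Qed.

Lemma betaS v t : (1 <= t)%N ->
  bt v t.+1 = bt v t - deact_rate v t + \sum_(1 <= t' < t.+1) deact_rate v t' * g (t.+1 - t').
Proof.
move=> t1; rewrite !beta_deact_rate big_nat_recr //= [in RHS]big_nat_recr //=.
have -> : \sum_(1 <= t' < t) deact_rate v t' * (1 - Gcdf g (t.+1 - t')) =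
   \sum_(1 <= t' < t) deact_rate v t' * (1 - Gcdf g (t - t')) -
   \sum_(1 <= t' < t) deact_rate v t' * g (t.+1 - t').
  rewrite -sumrB; apply: eq_big_nat => t' /andP[_ t't].
  by rewrite subSn ?(ltnW t't) // GcdfS; ring.
by rewrite subSnn GcdfS Gcdf0 add0r; ring.
Qed.

Lemma notif_rate_sdn_beta v t : (t <= T.+1)%N -> notif_rate pis v t * bt v t = deact_rate v t.
Proof.
move=> tT; rewrite /notif_rate mulr_suml; apply: eq_bigr => s _.
by rewrite -mulrA sdn_prob_beta.
Qed.

Definition reactivation_mass v s a := \sum_(1 <= t < s) deact_rate v t * g (a - t).

(* Credit collected before [s] plus the expected future credit under the law
   of the reactivation time at [s]: active with probability [bt v s], due back
   at [a > s] with probability [reactivation_mass v s a]. *)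
Definition potential v s :=
  bt v s * future_credit pis v (T.+1 - s) s s +
  \sum_(s.+1 <= a < T.+1) reactivation_mass v s a * future_credit pis v (T.+1 - s) s a +
  \sum_(1 <= t < s) credit pis v t * bt v t.

Lemma sum_zw_future_credit v n s : (T - s = n)%N -> (1 <= s <= T)%N ->
  \sum_(k < T.+1) zw g k * future_credit pis v n s.+1 (s + k.+1)%N =
  \sum_(s.+1 <= a < T.+1) g (a - s) * future_credit pis v n s.+1 a.
Proof.
move=> hn hs.
pose F k := if (k < n)%N then g k.+1 * future_credit pis v n s.+1 (s + k.+1)%N else 0.
rewrite (eq_bigr (fun k : 'I_T.+1 => F k)) => [|k _]; last first.
  rewrite /F; case: ifP => kn; first by rewrite /zw ifT //; lia.
  by rewrite future_credit_late ?mulr0 //; lia.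
rewrite -(big_mkord xpredT F) -big_mkcond /=.
rewrite [in RHS](_ : s.+1 = 0 + s.+1)%N // big_addn.
have -> : (T.+1 - s.+1 = n)%N by lia.
rewrite [in RHS](@big_nat_widen _ _ _ 0 n T.+1); last by lia.
by apply: eq_big => // k _; congr (g _ * future_credit _ _ _ _ _); lia.
Qed.

Lemma potentialS v s : (1 <= s <= T)%N -> potential v s = potential v s.+1.
Proof.
move=> hs; have [s1 sT] := andP hs; have sT1 : (s <= T.+1)%N by lia.
set n := (T - s)%N; rewrite /potential.
have -> : (T.+1 - s = n.+1)%N by rewrite /n; lia.
have -> : (T.+1 - s.+1 = n)%N by rewrite /n; lia.
rewrite /= leqnn step_exp_active //.
rewrite (future_credit_active _ _ _ (leqnSn s)) sum_zw_future_credit //.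
rewrite (big_nat_recr _ _ _ s1) /=.
have -> : \sum_(s.+1 <= a < T.+1) reactivation_mass v s a * future_credit pis v n.+1 s a =
    \sum_(s.+1 <= a < T.+1) reactivation_mass v s a * future_credit pis v n s.+1 a.
  by apply: eq_big_nat => a /andP[sa _]; rewrite future_credit_inactive.
have -> : \sum_(s.+2 <= a < T.+1) reactivation_mass v s.+1 a * future_credit pis v n s.+1 a =
    \sum_(s.+2 <= a < T.+1) reactivation_mass v s a * future_credit pis v n s.+1 a +
    deact_rate v s * \sum_(s.+2 <= a < T.+1) g (a - s) * future_credit pis v n s.+1 a.
  rewrite mulr_sumr -big_split /=; apply: eq_big_nat => a _.
  by rewrite /reactivation_mass big_nat_recr //=; ring.
rewrite -(notif_rate_sdn_beta v sT1) (betaS v s1).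
have [s_ltT|s_geT] := ltnP s T.
  rewrite !(big_ltn (_ : s.+1 < T.+1)%N) //= subSnn.
  rewrite (@big_nat_recr _ _ _ s 1 (fun t => deact_rate v t * g (s.+1 - t)) s1) /= subSnn.
  by rewrite -(notif_rate_sdn_beta v sT1) /reactivation_mass; ring.
have sTe : s = T by apply/eqP; rewrite eqn_leq sT s_geT.
have empty m (F : nat -> R) : (T.+1 <= m)%N -> \sum_(m <= a < T.+1) F a = 0.
  by move=> Tm; rewrite big_geq.
by rewrite !empty ?sTe // /n sTe subnn /=; ring.
Qed.

Lemma potential1 v : potential v 1 = future_credit pis v T 1 0.
Proof.
rewrite /potential subSS subn0 /beta big_geq // subr0 mul1r [X in _ + X]big_geq // addr0.
rewrite big1 ?addr0 => [|a _]; last by rewrite /reactivation_mass big_geq // mul0r.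
by rewrite (future_credit_active _ _ _ (leq0n 1)).
Qed.

Lemma potential_end v : potential v T.+1 = \sum_(1 <= t < T.+1) credit pis v t * bt v t.
Proof. by rewrite /potential subnn /= mulr0 add0r big_geq // add0r. Qed.

(* [bt v t] is exactly the probability that [v] is active at [t]. *)
Lemma future_credit_sdn v :
  future_credit pis v T 1 0 = \sum_(1 <= t < T.+1) credit pis v t * bt v t.
Proof.
rewrite -potential1 -potential_end.
suff pot k : (k <= T)%N -> potential v 1 = potential v k.+1 by exact: pot.
elim: k => [//|k IH] kT; rewrite IH ?(ltnW kT) //; apply: potentialS; lia.
Qed.

Lemma credit_sdn_ge t : (1 <= t <= T)%N ->
  (2 - q)^-1 * \sum_(s < S) lam s t * (1 - \prod_(v < V) (1 - x v s t * p v s))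
  <= \sum_v credit pis v t * bt v t.
Proof.
move=> ht; have tT : (t <= T.+1)%N by lia.
rewrite /credit; under [X in _ <= X]eq_bigr do rewrite mulr_suml.
rewrite exchange_big mulr_sumr /=; apply: ler_sum => s _.
rewrite one_sub_prod_telescope !mulr_sumr; apply: ler_sum => v _.
have -> : lam s t * resp_prob pis v s t * prefix_no_resp pis v s t * bt v t =
    (2 - q)^-1 * (lam s t * (x v s t * p v s * prefix_no_resp pis v s t)).
  transitivity (lam s t * p v s * prefix_no_resp pis v s t * (pis v s t * bt v t)).
    by rewrite /resp_prob; ring.
  by rewrite sdn_prob_beta //; ring.
rewrite ler_wpM2l ?invr_ge0 ?(le_trans ler01 one_le_2_sub_mdhr) //.
rewrite ler_wpM2l ?lam_ge0 //.
have [x0 x1] := andP (x01 v s ht); have [p0 p1] := andP (p01 v s).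
rewrite ler_wpM2l ?mulr_ge0 //; apply: ler_prod => u _.
have [xu0 xu1] := andP (x01 u s ht); have [pu0 pu1] := andP (p01 u s).
have [su0 sux] := andP (sdn_prob_le u s ht).
have xp_le1 : x u s t * p u s <= 1 by rewrite mulr_ile1.
have sp_le : pis u s t * p u s <= x u s t * p u s by rewrite ler_wpM2r.
rewrite /resp_prob; apply/andP; split; lra.
Qed.

Lemma POL_sdn_ge : (2 - q)^-1 * fobj T lam p x <= POL T lam p g pis.
Proof.
apply: le_trans (sum_future_credit_le_polv sdn_prob01 (fun=> 0%N) (leqnn 1) (leqnn _)).
under eq_bigr do rewrite future_credit_sdn.
rewrite exchange_big /fobj mulr_sumr /=; apply: ler_sum_nat => t ht.
exact: credit_sdn_ge.
Qed.

End ScaledDownNotification.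

End Model.

Lemma LPval_le_fobj (R : realType) (V S T : nat)
  (lam : 'I_S -> nat -> R) (p : 'I_V -> 'I_S -> R) (g : nat -> R)
  (lam_ge0 : forall s t, (1 <= t <= T)%N -> 0 <= lam s t)
  (p01 : forall v s, 0 <= p v s <= 1) (xLP : vec R V S) :
  lp_optimal T lam p g xLP ->
  (1 - (expR 1)^-1) * LPval T lam p g <= fobj T lam p xLP.
Proof.
move=> [xLP_feas xLP_max].
have e_ge0 : 0 <= 1 - (expR 1)^-1 :> R.
  by rewrite subr_ge0 ltW // invf_lt1 ?expR_gt0 // expR_gt1.
apply: (@le_trans _ _ ((1 - (expR 1)^-1) * lpobj T lam p xLP)).
  rewrite ler_wpM2l //; apply: ge_sup; first by exists (lpobj T lam p xLP), xLP.
  by move=> _ [z z_feas <-]; exact: xLP_max.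
rewrite /lpobj /fobj mulr_sumr; apply: ler_sum_nat => t ht.
rewrite mulr_sumr; apply: ler_sum => s _; rewrite mulrCA ler_wpM2l ?lam_ge0 //.
apply: one_sub_expN1_min_le => v; have [/(_ s t ht) /andP[x0 x1] _] := xLP_feas v.
by have [p0 p1] := andP (p01 v s); rewrite mulr_ge0 //= mulr_ile1.
Qed.

Theorem theorem3 (R : realType) (V S T : nat)
  (lam : 'I_S -> nat -> R) (p : 'I_V -> 'I_S -> R) (g : nat -> R)
  (hlam0 : forall s t, (1 <= t <= T)%N -> 0 <= lam s t)
  (hlam1 : forall t, (1 <= t <= T)%N -> \sum_(s < S) lam s t <= 1)
  (hp : forall v s, 0 <= p v s <= 1)
  (hg0 : forall i, (0 < i)%N -> 0 <= g i)
  (hg1 : Gcdf g n @[n --> \oo] --> (1 : R))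
  (xLP : vec R V S) (hLP : lp_optimal T lam p g xLP)
  (m : nat) (y : nat -> vec R V S) (hAA : aa_valid T lam p g m y)
  (xSQ : vec R V S) (hSQ : sq_valid T lam p g xSQ)
  (xstar : vec R V S)
  (hstar : xstar = xLP \/ xstar = aa_output m y \/ xstar = xSQ)
  (hmax : fobj T lam p xLP <= fobj T lam p xstar /\
          fobj T lam p (aa_output m y) <= fobj T lam p xstar /\
          fobj T lam p xSQ <= fobj T lam p xstar) :
  (2 - mdhr g)^-1 * (1 - (expR 1)^-1) * LPval T lam p g
    <= POL T lam p g (sdn_prob lam g (mdhr g) xstar).
Proof.
have xstar_feas : inP T lam g xstar.
  case: hstar => [->|[->|->]]; first exact: hLP.1.
    by apply: aa_output_feasible => j /hAA[].
  by move=> v; have [] := hSQ v.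
apply: le_trans (POL_sdn_ge hlam0 hlam1 hp hg0 hg1 xstar_feas).
rewrite -mulrA ler_wpM2l ?invr_ge0 ?(le_trans ler01 (one_le_2_sub_mdhr hg0 hg1)) //.
exact: le_trans (LPval_le_fobj hlam0 hp hLP) hmax.1.
Qed.
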